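(* Let $\mathcal{D}$ be a liability category, let $N=(G,X,\lambda,\iota;\delta,\hat\alpha)$ be a liability network in $\mathcal{D}$ with $G=(V,E,s,t)$ and liability sheaf $\mathcal{L}$ on $\mathcal{H}_G$. Let $P=\prod_{v}X_v$, $B=\prod_eX_{s(e)}^{\lambda_e}$, $D:P\to B$ with $D_e=\delta_e\circ\pi_{s(e)}$, $A:B\to P$ with $A_v=\alpha_v\circ\langle\pi_e\rangle_{t(e)=v}$, $\Phi=A\circ D:P\to P$, and $\Psi=D\circ A:B\to B$. Then $D$ and $A$ restrict to mutually inverse isomorphisms \[ D:\mathrm{Eq}(\mathrm{id}_P,\Phi)\xrightarrow{\cong}\mathrm{Eq}(\mathrm{id}_B,\Psi),\qquad A:\mathrm{Eq}(\mathrm{id}_B,\Psi)\xrightarrow{\cong}\mathrm{Eq}(\mathrm{id}_P,\Phi) \] in $\mathcal{D}$. In particular $H^0(\mathcal{H}_G;\mathcal{L})\cong\mathrm{Eq}(\mathrm{id}_B,D\circ A)$, and the induced maps $D_*:\mathrm{Fix}(\Phi_* )\to\mathrm{Fix}(\Psi_* )$ and $A_*:\mathrm{Fix}(\Psi_* )\to\mathrm{Fix}(\Phi_* )$ are mutually inverse bijections.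
   Context: A liability category is a category $\mathcal{D}$ such that: (1) $\mathcal{D}$ has a terminal object $1$, all finite products, and equalizers; (2) each $\mathrm{Hom}(1,P)$ carries a partial order and postcomposition with any morphism is order-preserving; (3) each $P$ has a distinguished pullback-stable class $\mathcal{S}_P$ of monomorphisms into $P$ (constraint subobjects); (4) a bound selector $\beta_P:\mathrm{Hom}(1,P)\to\mathcal{S}_P$; (5) $\mathrm{Hom}(1,\prod_iP_i)\to\prod_i\mathrm{Hom}(1,P_i)$ is an order isomorphism for finite families with componentwise order. A liability network in $\mathcal{D}$ is $N=(G,X,\lambda,\iota;\delta,\hat\alpha)$ with $G=(V,E,s,t)$ a finite directed graph, payment objects $X_v$, liability morphisms $\lambda_e:1\to X_{s(e)}$, exogenous resources $\iota_v:1\to X_v$, distributors $\delta_e:X_{s(e)}\to X_{s(e)}^{\lambda_e}$ where $X_{s(e)}^{\lambda_e}$ is the domain of $\beta_{X_{s(e)}}(\lambda_e)$, and aggregators $\hat\alpha_v:X_v\times\prod_{t(e)=v}X_{s(e)}^{\lambda_e}\to X_v$; the partial aggregator is $\alpha_v=\hat\alpha_v\circ(\iota_v\times\mathrm{id})$, empty products being $1$. The liability hypergraph $\mathcal{H}_G$ has vertices $V\sqcup\{e^*:e\in E\}$ and hyperedges $h_v^\delta$ (source $\{v\}$, target $\{e^*:s(e)=v\}$), $h_v^\alpha$ (empty source, target $\{e^*:t(e)=v\}\cup\{v\}$); its incidence category $\mathcal{I}(\mathcal{H}_G)$ has one non-identity morphism $h\to w$ per incidence and no other composites. The liability sheaf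 $\mathcal{L}:\mathcal{I}(\mathcal{H}_G)\to\mathcal{D}$ has stalks $X_v$ at $v$ and $h_v^\delta$, $X_{s(e)}^{\lambda_e}$ at $e^*$, $\prod_{t(e)=v}X_{s(e)}^{\lambda_e}$ at $h_v^\alpha$, and restrictions $\mathrm{id}$, $\delta_e$, projections $\pi_e$, and $\alpha_v$ for $h_v^\delta\to v$, $h_v^\delta\to e^*$, $h_v^\alpha\to e^*$, $h_v^\alpha\to v$ respectively. $H^0(\mathcal{H}_G;\mathcal{L})=\lim_{\mathcal{I}(\mathcal{H}_G)}\mathcal{L}$. For an endomorphism $\Theta:Y\to Y$, $\Theta_*$ is the map $\rho\mapsto\Theta\circ\rho$ on $\mathrm{Hom}(1,Y)$ and $\mathrm{Fix}(\Theta_* )=\{\rho:1\to Y:\Theta\circ\rho=\rho\}$. $\mathrm{Eq}$ denotes the equalizer. *)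

From mathcomp Require Import all_boot.

Set Implicit Arguments.
Unset Strict Implicit.
Unset Printing Implicit Defensive.

Record Cat := {
  Ob :> Type;
  Hom : Ob -> Ob -> Type;
  idm : forall X, Hom X X;
  comp : forall X Y Z, Hom Y Z -> Hom X Y -> Hom X Z;
  comp_idl : forall X Y (f : Hom X Y), comp (idm Y) f = f;
  comp_idr : forall X Y (f : Hom X Y), comp f (idm X) = f;
  comp_assoc : forall X Y Z W (h : Hom Z W) (g : Hom Y Z) (f : Hom X Y),
      comp h (comp g f) = comp (comp h g) f
}.
Arguments Hom {c} X Y.
Arguments idm {c} X.
Arguments comp {c X Y Z} g f.

Notation "g ⊚ f" := (comp g f) (at level 40, left associativity).

Section CatDefs.
Variable C : Cat.

Definition isMono (Q P : C) (m : Hom Q P) : Prop :=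
  forall Z (f g : Hom Z Q), m ⊚ f = m ⊚ g -> f = g.

(* m' : Q' -> Y, f' : Q' -> Q is a pullback of m : Q -> P along f : Y -> P *)
Definition isPullback (Q P Y Q' : C) (m : Hom Q P) (f : Hom Y P)
  (m' : Hom Q' Y) (f' : Hom Q' Q) : Prop :=
  m ⊚ f' = f ⊚ m' /\
  forall Z (a : Hom Z Y) (b : Hom Z Q), f ⊚ a = m ⊚ b ->
    exists u : Hom Z Q', (m' ⊚ u = a /\ f' ⊚ u = b) /\
      forall u' : Hom Z Q', m' ⊚ u' = a -> f' ⊚ u' = b -> u' = u.

(* subobject candidates: a morphism into P together with its domain *)
Definition Sub (P : C) := {Q : Ob C & Hom Q P}.
End CatDefs.

Record LiabilityCategory := {
  cat :> Cat;
  one : cat;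
  bang : forall X : cat, Hom X one;
  bang_uniq : forall (X : cat) (f g : Hom X one), f = g;
  prodOb : forall (I : finType), (I -> Ob cat) -> Ob cat;
  proj : forall (I : finType) (F : I -> Ob cat) (i : I), Hom (prodOb F) (F i);
  tuple : forall (I : finType) (F : I -> Ob cat) (Z : cat),
      (forall i, Hom Z (F i)) -> Hom Z (prodOb F);
  proj_tuple : forall (I : finType) (F : I -> Ob cat) (Z : cat)
      (f : forall i, Hom Z (F i)) (i : I), proj F i ⊚ tuple f = f i;
  prod_ext : forall (I : finType) (F : I -> Ob cat) (Z : cat)
      (g h : Hom Z (prodOb F)), (forall i, proj F i ⊚ g = proj F i ⊚ h) -> g = h;
  eqOb : forall X Y : cat, Hom X Y -> Hom X Y -> Ob cat;
  eqMap : forall (X Y : cat) (f g : Hom X Y), Hom (eqOb f g) X;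
  eqMap_eq : forall (X Y : cat) (f g : Hom X Y), f ⊚ eqMap f g = g ⊚ eqMap f g;
  eqLift : forall (X Y : cat) (f g : Hom X Y) (Z : cat) (k : Hom Z X),
      f ⊚ k = g ⊚ k -> Hom Z (eqOb f g);
  eqLift_comm : forall (X Y : cat) (f g : Hom X Y) (Z : cat) (k : Hom Z X)
      (H : f ⊚ k = g ⊚ k), eqMap f g ⊚ eqLift H = k;
  eqMap_mono : forall (X Y : cat) (f g : Hom X Y), isMono (eqMap f g);
  gle : forall P : cat, Hom one P -> Hom one P -> Prop;
  gle_refl : forall (P : cat) (r : Hom one P), gle r r;
  gle_trans : forall (P : cat) (r s u : Hom one P), gle r s -> gle s u -> gle r u;
  gle_antisym : forall (P : cat) (r s : Hom one P), gle r s -> gle s r -> r = s;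
  gle_post : forall (P Q : cat) (f : Hom P Q) (r s : Hom one P),
      gle r s -> gle (f ⊚ r) (f ⊚ s);
  constr : forall P : cat, Sub P -> Prop;
  constr_mono : forall (P : cat) (S : Sub P), constr S -> isMono (projT2 S);
  constr_pb : forall (P : cat) (S : Sub P), constr S ->
      forall (Y : cat) (f : Hom Y P), exists (Q' : cat) (m' : Hom Q' Y)
        (f' : Hom Q' (projT1 S)),
        isPullback (projT2 S) f m' f' /\ constr (existT _ Q' m');
  beta : forall P : cat, Hom one P -> Sub P;
  beta_constr : forall (P : cat) (r : Hom one P), constr (beta r);
  (* (5) Hom(1, prod P_i) -> prod Hom(1, P_i) (a bijection by the universal
     property of products) is an order isomorphism for the componentwise order *)
  gle_prod : forall (I : finType) (F : I -> Ob cat) (r s : Hom one (prodOb F)),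
      gle r s <-> (forall i, gle (proj F i ⊚ r) (proj F i ⊚ s))
}.
Arguments one {l}.
Arguments bang {l} X.
Arguments prodOb {l I} F.
Arguments proj {l I} F i.
Arguments tuple {l I F Z} f.
Arguments eqOb {l X Y} f g.
Arguments eqMap {l X Y} f g.
Arguments beta {l P} r.

Section LCDefs.
Variable C : LiabilityCategory.

Definition binprod (X Y : C) : C :=
  prodOb (fun b : bool => if b then X else Y).
Definition pairm (Z X Y : C) (f : Hom Z X) (g : Hom Z Y) : Hom Z (binprod X Y) :=
  tuple (F := fun b : bool => if b then X else Y)
    (fun b => match b return Hom Z (if b then X else Y) with
              | true => f | false => g end).
End LCDefs.

Record LiabilityNetwork (C : LiabilityCategory) := {
  V : finType;
  E : finType;
  src : E -> V;
  tgt : E -> V;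
  X : V -> Ob C;
  lam : forall e : E, Hom one (X (src e));
  iota : forall v : V, Hom one (X v);
  delta : forall e : E, Hom (X (src e)) (projT1 (beta (lam e)));
  alpha_hat : forall v : V,
      Hom (binprod (X v)
             (prodOb (fun e : {e : E | tgt e == v} => projT1 (beta (lam (sval e))))))
          (X v)
}.
Arguments src {C} l e.
Arguments tgt {C} l e.
Arguments X {C} l v.
Arguments lam {C} l e.
Arguments iota {C} l v.
Arguments delta {C} l e.
Arguments alpha_hat {C} l v.

Section NetDefs.
Variables (C : LiabilityCategory) (N : LiabilityNetwork C).

Definition Xl (e : E N) : C := projT1 (beta (lam N e)).

Definition Pin (v : V N) : C :=
  prodOb (fun e : {e : E N | tgt N e == v} => Xl (sval e)).

Definition inEdge (e : E N) : {e' : E N | tgt N e' == tgt N e} :=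
  exist _ e (eqxx (tgt N e)).

(* partial aggregator α_v = α̂_v ∘ (ι_v × id), precomposed with the
   canonical iso Q ≅ 1 × Q *)
Definition alpha (v : V N) : Hom (Pin v) (X N v) :=
  alpha_hat N v ⊚ pairm (iota N v ⊚ bang (Pin v)) (idm (Pin v)).

Definition Pobj : C := prodOb (X N).
Definition Bobj : C := prodOb Xl.

Definition Dmap : Hom Pobj Bobj :=
  tuple (F := Xl) (fun e => delta N e ⊚ proj (X N) (src N e)).

Definition Amap : Hom Bobj Pobj :=
  tuple (F := X N) (fun v => alpha v ⊚
    tuple (F := fun e : {e : E N | tgt N e == v} => Xl (sval e))
          (fun e => proj Xl (sval e))).

Definition Phi : Hom Pobj Pobj := Amap ⊚ Dmap.
Definition Psi : Hom Bobj Bobj := Dmap ⊚ Amap.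

Definition EqP : C := eqOb (idm Pobj) Phi.
Definition EqB : C := eqOb (idm Bobj) Psi.

(* ---- the liability sheaf L on the incidence category I(H_G) ----
   objects: v, e*, h_v^δ, h_v^α; stalks X_v, X^{λ_e}, X_v, Pin v;
   non-identity morphisms (one per incidence):
     h_v^δ -> v   (id),        h_v^δ -> e* for s(e)=v (δ_e),
     h_v^α -> e* for t(e)=v (π_e), h_v^α -> v (α_v). *)
Record SheafCone := {
  apex : C;
  leg_v : forall v : V N, Hom apex (X N v);
  leg_e : forall e : E N, Hom apex (Xl e);
  leg_hd : forall v : V N, Hom apex (X N v);
  leg_ha : forall v : V N, Hom apex (Pin v);
  cone_hd_v : forall v, leg_v v = idm (X N v) ⊚ leg_hd v;
  cone_hd_e : forall e, leg_e e = delta N e ⊚ leg_hd (src N e);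
  cone_ha_e : forall e, leg_e e = proj (fun e' : {e' : E N | tgt N e' == tgt N e}
                                          => Xl (sval e')) (inEdge e)
                                  ⊚ leg_ha (tgt N e);
  cone_ha_v : forall v, leg_v v = alpha v ⊚ leg_ha v
}.

Definition cone_factor (K L : SheafCone) (u : Hom (apex K) (apex L)) : Prop :=
  (forall v, leg_v K v = leg_v L v ⊚ u) /\
  (forall e, leg_e K e = leg_e L e ⊚ u) /\
  (forall v, leg_hd K v = leg_hd L v ⊚ u) /\
  (forall v, leg_ha K v = leg_ha L v ⊚ u).

(* L is a limit cone, so apex L is H^0(H_G; L) = lim L *)
Definition isLimitCone (L : SheafCone) : Prop :=
  forall K : SheafCone, exists u : Hom (apex K) (apex L),
    cone_factor u /\ forall u', cone_factor u' -> u' = u.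

Definition isIso (Y Z : C) : Prop :=
  exists (f : Hom Y Z) (g : Hom Z Y), g ⊚ f = idm Y /\ f ⊚ g = idm Z.

Definition FixPt (Y : C) (Theta : Hom Y Y) (r : Hom one Y) : Prop :=
  Theta ⊚ r = r.
End NetDefs.

(* For any maps f : P -> B and g : B -> P, f and g restrict to mutually inverse
   isomorphisms between Eq(id, g f) and Eq(id, f g): if g f k = k then
   f g (f k) = f k and g (f k) = k.  Take f = D and g = A.
   For the sheaf, a cone over L is determined by its legs to the edge vertices
   e*: the leg to h_v^alpha is the tuple of the legs to the incoming e*, the legs
   to v and h_v^delta are then forced by alpha_v, and the incidence h_v^delta -> e*
   says exactly that the tuple of edge legs is a fixed point of Psi = D A.  Hence
   Eq(id_B, Psi) carries a limit cone, and any limit is isomorphic to it. *)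
From mathcomp Require Import all_boot.

Set Implicit Arguments.
Unset Strict Implicit.
Unset Printing Implicit Defensive.

Lemma eqMap_fixed (C : LiabilityCategory) (Y : C) (h : Hom Y Y) :
  h ⊚ eqMap (idm Y) h = eqMap (idm Y) h.
Proof. by rewrite -eqMap_eq comp_idl. Qed.

Lemma fixed_rotate (C : Cat) (P B Z : C) (f : Hom P B) (g : Hom B P)
    (k : Hom Z P) :
  (g ⊚ f) ⊚ k = k -> (f ⊚ g) ⊚ (f ⊚ k) = f ⊚ k.
Proof. by move=> gfk; rewrite -comp_assoc (comp_assoc g) gfk. Qed.

Lemma fixed_roundtrip (C : Cat) (P B Z : C) (f : Hom P B) (g : Hom B P)
    (k : Hom Z P) :
  (g ⊚ f) ⊚ k = k -> g ⊚ (f ⊚ k) = k.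
Proof. by rewrite comp_assoc. Qed.

Lemma eq_fixed_rotate_iso (C : LiabilityCategory) (P B : C)
    (f : Hom P B) (g : Hom B P) :
  exists (d : Hom (eqOb (idm P) (g ⊚ f)) (eqOb (idm B) (f ⊚ g)))
         (a : Hom (eqOb (idm B) (f ⊚ g)) (eqOb (idm P) (g ⊚ f))),
    eqMap (idm B) (f ⊚ g) ⊚ d = f ⊚ eqMap (idm P) (g ⊚ f) /\
    eqMap (idm P) (g ⊚ f) ⊚ a = g ⊚ eqMap (idm B) (f ⊚ g) /\
    a ⊚ d = idm _ /\ d ⊚ a = idm _.
Proof.
set p := eqMap (idm P) (g ⊚ f); set b := eqMap (idm B) (f ⊚ g).
have fp_eq : idm B ⊚ (f ⊚ p) = (f ⊚ g) ⊚ (f ⊚ p).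
  by rewrite comp_idl fixed_rotate // eqMap_fixed.
have gb_eq : idm P ⊚ (g ⊚ b) = (g ⊚ f) ⊚ (g ⊚ b).
  by rewrite comp_idl fixed_rotate // eqMap_fixed.
have bd : b ⊚ eqLift fp_eq = f ⊚ p by exact: eqLift_comm.
have pa : p ⊚ eqLift gb_eq = g ⊚ b by exact: eqLift_comm.
exists (eqLift fp_eq), (eqLift gb_eq); split; first exact: bd.
split; first exact: pa.
split; apply: eqMap_mono; rewrite comp_idr comp_assoc.
- by rewrite pa -comp_assoc bd; apply/fixed_roundtrip/eqMap_fixed.
- by rewrite bd -comp_assoc pa; apply/fixed_roundtrip/eqMap_fixed.
Qed.

Section SheafLimit.
Variables (C : LiabilityCategory) (N : LiabilityNetwork C).

Definition projPin (v : V N) : Hom (Bobj N) (Pin v) :=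
  tuple (F := fun e : {e : E N | tgt N e == v} => Xl (sval e))
        (fun e => proj (@Xl C N) (sval e)).

Lemma proj_Dmap (e : E N) :
  proj (@Xl C N) e ⊚ Dmap N = delta N e ⊚ proj (X N) (src N e).
Proof. exact: proj_tuple. Qed.

Lemma proj_Amap (v : V N) : proj (X N) v ⊚ Amap N = alpha v ⊚ projPin v.
Proof. exact: proj_tuple. Qed.

Lemma proj_projPin (v : V N) (e : {e : E N | tgt N e == v}) :
  proj _ e ⊚ projPin v = proj (@Xl C N) (sval e).
Proof. exact: proj_tuple. Qed.

Lemma cone_proj_leg_ha (K : SheafCone N) (v : V N) (e : {e : E N | tgt N e == v}) :
  proj (fun e : {e : E N | tgt N e == v} => Xl (sval e)) e ⊚ leg_ha K v
  = leg_e K (sval e).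
Proof.
case: e => e /= tgt_e; have tgt_eE := eqP tgt_e; subst v.
by rewrite (cone_ha_e K e) /inEdge (bool_irrelevance tgt_e (eqxx _)).
Qed.

Lemma projPin_cone (K : SheafCone N) (v : V N) :
  projPin v ⊚ tuple (leg_e K) = leg_ha K v.
Proof.
apply: prod_ext => e.
by rewrite comp_assoc proj_projPin proj_tuple cone_proj_leg_ha.
Qed.

Lemma cone_edges_fixed (K : SheafCone N) :
  Psi N ⊚ tuple (leg_e K) = tuple (leg_e K).
Proof.
apply: prod_ext => e; rewrite proj_tuple /Psi !comp_assoc proj_Dmap.
rewrite -!comp_assoc (comp_assoc (proj _ _)) proj_Amap -comp_assoc projPin_cone.
by rewrite -cone_ha_v cone_hd_v comp_idl -cone_hd_e.
Qed.

Let b := eqMap (idm (Bobj N)) (Psi N).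

Lemma eqB_cone_hd_e (e : E N) :
  proj (@Xl C N) e ⊚ b = delta N e ⊚ (alpha (src N e) ⊚ (projPin (src N e) ⊚ b)).
Proof.
rewrite -{1}[b](eqMap_fixed (Psi N)) -/b /Psi !comp_assoc proj_Dmap.
by rewrite -!comp_assoc (comp_assoc (proj _ _)) proj_Amap !comp_assoc.
Qed.

Lemma eqB_cone_ha_e (e : E N) :
  proj (@Xl C N) e ⊚ b
  = proj (fun e' : {e' : E N | tgt N e' == tgt N e} => Xl (sval e')) (inEdge e)
    ⊚ (projPin (tgt N e) ⊚ b).
Proof. by rewrite comp_assoc proj_projPin. Qed.

Definition eqB_cone : SheafCone N :=
  {| apex := EqB N;
     leg_v := fun v => alpha v ⊚ (projPin v ⊚ b);
     leg_e := fun e => proj (@Xl C N) e ⊚ b;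
     leg_hd := fun v => alpha v ⊚ (projPin v ⊚ b);
     leg_ha := fun v => projPin v ⊚ b;
     cone_hd_v := fun v => esym (comp_idl _);
     cone_hd_e := eqB_cone_hd_e;
     cone_ha_e := eqB_cone_ha_e;
     cone_ha_v := fun v => erefl |}.

Lemma eqB_cone_limit : isLimitCone eqB_cone.
Proof.
move=> K; set k := tuple (leg_e K).
have k_fixed : idm (Bobj N) ⊚ k = Psi N ⊚ k by rewrite comp_idl cone_edges_fixed.
have bk : b ⊚ eqLift k_fixed = k by exact: eqLift_comm.
have leg_eE e : leg_e K e = proj (@Xl C N) e ⊚ b ⊚ eqLift k_fixed.
  by rewrite -comp_assoc bk proj_tuple.
have leg_haE v : leg_ha K v = projPin v ⊚ b ⊚ eqLift k_fixed.
  by rewrite -comp_assoc bk projPin_cone.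
exists (eqLift k_fixed); split.
- split; [|split; [|split]] => /=.
  + by move=> v; rewrite cone_ha_v leg_haE -!comp_assoc.
  + exact: leg_eE.
  + move=> v; rewrite -[leg_hd K v]comp_idl -cone_hd_v cone_ha_v leg_haE.
    by rewrite -!comp_assoc.
  + by move=> v; rewrite leg_haE -!comp_assoc.
- move=> u [_ [leg_eu _]]; apply: eqMap_mono; rewrite -/b bk.
  by apply: prod_ext => e; rewrite proj_tuple leg_eu /= comp_assoc.
Qed.

Lemma cone_factor_id (K : SheafCone N) : cone_factor (idm (apex K)).
Proof. by split; [|split; [|split]] => x; rewrite comp_idr. Qed.

Lemma cone_factor_comp (K L M : SheafCone N) (u : Hom (apex K) (apex L))
    (w : Hom (apex L) (apex M)) :
  cone_factor u -> cone_factor w -> cone_factor (w ⊚ u).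
Proof.
move=> [u_v [u_e [u_hd u_ha]]] [w_v [w_e [w_hd w_ha]]].
by split; [|split; [|split]] => x;
  rewrite comp_assoc -?w_v -?w_e -?w_hd -?w_ha -?u_v -?u_e -?u_hd -?u_ha.
Qed.

Lemma limit_cone_factor_id (L : SheafCone N) (u : Hom (apex L) (apex L)) :
  isLimitCone L -> cone_factor u -> u = idm (apex L).
Proof.
move=> L_lim u_factor; have [i [_ L_uniq]] := L_lim L.
by rewrite (L_uniq _ u_factor) (L_uniq _ (cone_factor_id L)).
Qed.

Lemma limit_cone_iso (L M : SheafCone N) :
  isLimitCone L -> isLimitCone M -> isIso (apex L) (apex M).
Proof.
move=> L_lim M_lim.
have [u [u_factor _]] := M_lim L; have [w [w_factor _]] := L_lim M.
exists u, w; split; apply: limit_cone_factor_id => //; exact: cone_factor_comp.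
Qed.

End SheafLimit.

Theorem mainTheorem3 (C : LiabilityCategory) (N : LiabilityNetwork C) :
  (* D and A restrict to mutually inverse isomorphisms
     Eq(id_P, Φ) ≅ Eq(id_B, Ψ) *)
  (exists (d : Hom (EqP N) (EqB N)) (a : Hom (EqB N) (EqP N)),
      eqMap (idm (Bobj N)) (Psi N) ⊚ d = Dmap N ⊚ eqMap (idm (Pobj N)) (Phi N) /\
      eqMap (idm (Pobj N)) (Phi N) ⊚ a = Amap N ⊚ eqMap (idm (Bobj N)) (Psi N) /\
      a ⊚ d = idm (EqP N) /\ d ⊚ a = idm (EqB N)) /\
  (* H^0(H_G; L) = lim L exists and is isomorphic to Eq(id_B, D ∘ A) *)
  (exists L : SheafCone N, isLimitCone L) /\
  (forall L : SheafCone N, isLimitCone L -> isIso (apex L) (EqB N)) /\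
  (* D_* : Fix(Φ_* ) -> Fix(Ψ_* ) and A_* : Fix(Ψ_* ) -> Fix(Φ_* )
     are well defined and mutually inverse bijections *)
  (forall r : Hom one (Pobj N), FixPt (Phi N) r -> FixPt (Psi N) (Dmap N ⊚ r)) /\
  (forall s : Hom one (Bobj N), FixPt (Psi N) s -> FixPt (Phi N) (Amap N ⊚ s)) /\
  (forall r : Hom one (Pobj N), FixPt (Phi N) r -> Amap N ⊚ (Dmap N ⊚ r) = r) /\
  (forall s : Hom one (Bobj N), FixPt (Psi N) s -> Dmap N ⊚ (Amap N ⊚ s) = s).
Proof.
split; first exact: eq_fixed_rotate_iso.
split; first by exists (eqB_cone N); exact: eqB_cone_limit.
split; first by move=> L L_lim; exact: (limit_cone_iso L_lim (@eqB_cone_limit C N)).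
split; first by move=> r; exact: fixed_rotate.
split; first by move=> s; exact: fixed_rotate.
split; first by move=> r; exact: fixed_roundtrip.
by move=> s; exact: fixed_roundtrip.
Qed.
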